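(* Let $n\equiv 0\pmod 3$. If there exist a ${}^{1}\mathrm{cDCQS}(g^n:2)$ and an $\mathrm{RDSQS}(g+2)$, then there exists an $\mathrm{mcDSQS}(gn+2)$.
   Context: A Steiner triple system $\mathrm{STS}(v)$: a $v$-set with $3$-subsets (blocks) such that each pair lies in exactly one block. A partial parallel class (PPC) of a set $Y$ is a set of pairwise disjoint blocks contained in $Y$; a parallel class (PC) of $Y$ is a PPC whose union is $Y$; a design is resolvable if its blocks partition into PCs of its point set. $\chi'(v)$ is the minimum over all $\mathrm{STS}(v)$ of the least number of PPCs into which its block set can be partitioned; an $\mathrm{STS}(v)$ admitting a partition into $\chi'(v)$ PPCs is an $\mathrm{mcSTS}(v)$. An $\mathrm{SQS}(v)$ is a $v$-set $X$ with $4$-subsets such that each $3$-subset lies in exactly one block; its derived design at $x$ is $\{B\setminus\{x\}:x\in B\}$ on $X\setminus\{x\}$. An $\mathrm{mcDSQS}(v)$ is an $\mathrm{SQS}(v)$ all of whose derived designs are $\mathrm{mcSTS}(v-1)$; an $\mathrm{RDSQS}(v)$ is an $\mathrm{SQS}(v)$ all of whose derived designs are resolvable. An incomplete $\mathrm{STS}(v,h)$ is $(Y,H,\mathcal{B})$, $|Y|=v$, $|H|=h$, each pair of $Y$ not inside $H$ in exactly one block and no pair inside $H$ in a block; it is a $\mathrm{gcSTS}(v,h)$ if $\mathcal{B}$ partitions into $\chi'(v)$ PPCs of $Y$ of which $\chi'(v)-\frac{v-h}{2}$ are PPCs of $Y\setminus H$. A $\mathrm{GDD}(2,3,gn)$ of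 type $g^n$ is $(Z,\mathcal{G},\mathcal{B})$, $\mathcal{G}$ a partition of $Z$ into $n$ groups of size $g$, $\mathcal{B}$ triples meeting each group in at most one point with each pair from distinct groups in exactly one block. For $g$ even, it is good colorable ($\mathrm{gcGDD}$) if $\mathcal{B}=\big(\bigcup_{G\in\mathcal{G},1\le i\le g/2}P_G^i\big)\cup P_H^*$ (a partition) where each $P_G^i$ is a PPC of $Z\setminus G$ and $P_H^*$ is a PPC of $Z\setminus H$ for some $H\in\mathcal{G}$, the special group. A $\mathrm{CQS}(g^n:s)$ is $(X,S,\mathcal{G},\mathcal{A})$ with $|S|=s$, $\mathcal{G}$ a partition of $X\setminus S$ into $n$ groups of size $g$, $\mathcal{A}$ a set of $4$-subsets such that every $3$-subset not contained in any $S\cup G$ lies in exactly one block and none contained in some $S\cup G$ lies in a block. With $\mathcal{A}_x=\{A\setminus\{x\}:x\in A\in\mathcal{A}\}$, a ${}^{1}\mathrm{cDCQS}(g^n:2)$ (for $g$ even) is a $\mathrm{CQS}(g^n:2)$ such that for each $x\in G\in\mathcal{G}$, $(X\setminus\{x\},(G\cup S)\setminus\{x\},\mathcal{A}_x)$ is a $\mathrm{gcSTS}(gn+1,g+1)$, and for each $x\in S$, $(X\setminus S,\mathcal{G},\mathcal{A}_x)$ is a $\mathrm{gcGDD}(2,3,gn)$ of type $g^n$, with the same special group for both points of $S$. *)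

From mathcomp Require Import all_boot.
Set Implicit Arguments. Unset Strict Implicit. Unset Printing Implicit Defensive.

Section Designs.
Variable T : finType.

Definition proper_col (K : Type) (B : {set {set T}}) (c : {set T} -> K) :=
  forall b1 b2, b1 \in B -> b2 \in B -> b1 != b2 -> c b1 = c b2 ->
    [disjoint b1 & b2].

Definition colourable (B : {set {set T}}) (k : nat) :=
  exists c : {set T} -> 'I_k, proper_col B c.

Definition is_STS (Y : {set T}) (B : {set {set T}}) :=
  (forall b, b \in B -> b \subset Y /\ #|b| = 3) /\
  (forall x y, x \in Y -> y \in Y -> x != y ->
     #|[set b in B | (x \in b) && (y \in b)]| = 1).

Definition resolvable (Y : {set T}) (B : {set {set T}}) :=
  exists m (c : {set T} -> 'I_m), proper_col B c /\
    forall i : 'I_m, \bigcup_(b in B | c b == i) b = Y.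

Definition is_SQS (X : {set T}) (A : {set {set T}}) :=
  (forall a, a \in A -> a \subset X /\ #|a| = 4) /\
  (forall t : {set T}, t \subset X -> #|t| = 3 -> #|[set a in A | t \subset a]| = 1).

Definition derived (A : {set {set T}}) (x : T) : {set {set T}} :=
  [set a :\ x | a in [set a0 in A | x \in a0]].
End Designs.

(* chi_is v k  :  k = chi'(v), the minimum over all STS(v) (taken, up to
   isomorphism, on the point set 'I_v) of the least number of PPCs into
   which the block set can be partitioned. *)
Definition chi_is (v k : nat) :=
  (exists B : {set {set 'I_v}}, is_STS [set: 'I_v] B /\ colourable B k) /\
  (forall (B : {set {set 'I_v}}) (j : nat),
      is_STS [set: 'I_v] B -> colourable B j -> k <= j).

Section Designs2.
Variable T : finType.

Definition mcSTS (Y : {set T}) (B : {set {set T}}) :=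
  is_STS Y B /\ exists k, chi_is #|Y| k /\ colourable B k.

Definition RDSQS (X : {set T}) (A : {set {set T}}) :=
  is_SQS X A /\ forall x, x \in X -> resolvable (X :\ x) (derived A x).

Definition mcDSQS (X : {set T}) (A : {set {set T}}) :=
  is_SQS X A /\ forall x, x \in X -> mcSTS (X :\ x) (derived A x).

Definition incomplete_STS (Y H : {set T}) (B : {set {set T}}) :=
  H \subset Y /\
  (forall b, b \in B -> b \subset Y /\ #|b| = 3) /\
  (forall x y, x \in Y -> y \in Y -> x != y -> ~~ ((x \in H) && (y \in H)) ->
     #|[set b in B | (x \in b) && (y \in b)]| = 1) /\
  (forall b, b \in B -> #|b :&: H| <= 1).

Definition gcSTS (Y H : {set T}) (B : {set {set T}}) :=
  incomplete_STS Y H B /\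
  exists k, chi_is #|Y| k /\
    exists c : {set T} -> 'I_k, proper_col B c /\
      exists C : {set 'I_k}, #|C| = k - (#|Y| - #|H|) %/ 2 /\
        forall b, b \in B -> c b \in C -> [disjoint b & H].

Definition GDD (Z : {set T}) (G : {set {set T}}) (g n : nat)
    (B : {set {set T}}) :=
  partition G Z /\ #|G| = n /\ (forall G0, G0 \in G -> #|G0| = g) /\
  (forall b, b \in B -> b \subset Z /\ #|b| = 3) /\
  (forall b G0, b \in B -> G0 \in G -> #|b :&: G0| <= 1) /\
  (forall x y, x \in Z -> y \in Z -> pblock G x != pblock G y ->
     #|[set b in B | (x \in b) && (y \in b)]| = 1).

(* good colourable GDD (g even) with special group H:
   B = (U_{G0 in G, i < g/2} P_{G0}^i) U P_H^*, P_{G0}^i a PPC of Z \ G0,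
   P_H^* a PPC of Z \ H. The colour Some (G0, i) encodes P_{G0}^i and the
   colour None encodes P_H^*. *)
Definition gcGDD (Z : {set T}) (G : {set {set T}}) (g n : nat)
    (B : {set {set T}}) (H : {set T}) :=
  ~~ odd g /\ GDD Z G g n B /\ H \in G /\
  exists c : {set T} -> option ({set T} * 'I_(g %/ 2)),
    proper_col B c /\
    forall b, b \in B ->
      match c b with
      | Some (G0, _) => G0 \in G /\ [disjoint b & G0]
      | None => [disjoint b & H]
      end.

Definition CQS (X S : {set T}) (G : {set {set T}}) (g n : nat)
    (A : {set {set T}}) :=
  S \subset X /\ partition G (X :\: S) /\ #|G| = n /\
  (forall G0, G0 \in G -> #|G0| = g) /\
  (forall a, a \in A -> a \subset X /\ #|a| = 4) /\
  (forall t : {set T}, t \subset X -> #|t| = 3 ->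
     (forall G0, G0 \in G -> ~~ (t \subset S :|: G0)) ->
     #|[set a in A | t \subset a]| = 1) /\
  (forall t : {set T}, t \subset X -> #|t| = 3 ->
     (exists G0, G0 \in G /\ t \subset S :|: G0) ->
     #|[set a in A | t \subset a]| = 0).

Definition cDCQS1 (X S : {set T}) (G : {set {set T}}) (g n : nat)
    (A : {set {set T}}) :=
  CQS X S G g n A /\ #|S| = 2 /\
  (forall G0 x, G0 \in G -> x \in G0 ->
     gcSTS (X :\ x) ((G0 :|: S) :\ x) (derived A x)) /\
  (exists H, forall x, x \in S -> gcGDD (X :\: S) G g n (derived A x) H).
End Designs2.

Definition exists_cDCQS1 (g n : nat) :=
  exists (S : {set 'I_(g * n + 2)}) (G : {set {set 'I_(g * n + 2)}})
         (A : {set {set 'I_(g * n + 2)}}),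
    cDCQS1 [set: 'I_(g * n + 2)] S G g n A.

Definition exists_RDSQS (v : nat) :=
  exists A : {set {set 'I_v}}, RDSQS [set: 'I_v] A.

Definition exists_mcDSQS (v : nat) :=
  exists A : {set {set 'I_v}}, mcDSQS [set: 'I_v] A.

(* Put a copy of the RDSQS(g+2) on S :|: G0 for every group G0 and add its blocks to
   the cDCQS.  A triple inside some S :|: G0 lies in exactly one block of that copy and
   in none of the CQS; every other triple lies in exactly one block of the CQS; so the
   result is an SQS(gn+2).  Since 3 divides n, gn+1 is not divisible by 3, which forces
   chi'(gn+1) >= (gn+2)/2.  At a point x of a group G0 the derived design is the
   gcSTS(gn+1, g+1) A_x plus a resolvable STS(g+1) on (S :|: G0) :\ x; its g/2 parallel
   classes reuse colours of A_x avoiding (S :|: G0) :\ x, and there are at least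
   chi'(gn+1) - g(n-1)/2 >= g/2 such colours.  At a point x of S, the class P_G0^i of the
   gcGDD avoids S :|: G0 and absorbs the i-th parallel class of the copy on S :|: G0, so
   1 + n g/2 <= chi'(gn+1) colours suffice. *)

From mathcomp Require Import all_boot zify.
From Stdlib Require Import IndefiniteDescription.
Set Implicit Arguments. Unset Strict Implicit. Unset Printing Implicit Defensive.

Section Designs.
Variable T : finType.
Implicit Types (x y : T) (Y D : {set T}) (A B : {set {set T}}).

Lemma disjointP (b1 b2 : {set T}) :
  reflect (forall x, x \in b1 -> x \in b2 -> False) [disjoint b1 & b2].
Proof.
apply: (iffP pred0P) => [h x x1 x2 | h x /=]; first by move: (h x); rewrite /= x1 x2.
by apply/negbTE/negP => /andP[/h].
Qed.

Lemma cards1_eq (b1 b2 : {set T}) B : #|B| = 1 -> b1 \in B -> b2 \in B -> b1 = b2.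
Proof. by move/eqP/cards1P=> [b ->]; rewrite !inE => /eqP-> /eqP->. Qed.

Lemma derivedP A x b :
  reflect (exists2 a, a \in A & x \in a /\ b = a :\ x) (b \in derived A x).
Proof.
apply: (iffP imsetP) => [[a] | [a aA [xa ->]]]; last by exists a; rewrite ?inE ?aA.
by rewrite inE => /andP[aA xa] ->; exists a.
Qed.

Lemma derived0 x : derived set0 x = set0 :> {set {set T}}.
Proof. by apply/setP => b; rewrite inE; apply/derivedP => -[a]; rewrite inE. Qed.

Lemma derivedU A1 A2 x : derived (A1 :|: A2) x = derived A1 x :|: derived A2 x.
Proof.
apply/setP => b; rewrite inE; apply/derivedP/orP => [[a] | [] /derivedP[a aA ax]].
  by rewrite inE => /orP[] aA ax; [left | right]; apply/derivedP; exists a.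
all: by exists a; rewrite // inE aA ?orbT.
Qed.

Lemma derived_bigcup (I : finType) (J : {set I}) (F : I -> {set {set T}}) x :
  derived (\bigcup_(i in J) F i) x = \bigcup_(i in J) derived (F i) x.
Proof. exact: (big_morph _ (fun A1 A2 => derivedU A1 A2 x) (derived0 x)). Qed.

Lemma derived_sub A D x b :
  (forall a, a \in A -> a \subset D) -> b \in derived A x -> b \subset D :\ x.
Proof. by move=> AD /derivedP[a aA [_ ->]]; apply: setSD; apply: AD. Qed.

Lemma derived_eq0 A D x :
  (forall a, a \in A -> a \subset D) -> x \notin D -> derived A x = set0.
Proof.
move=> AD xD; apply/setP => b; rewrite inE; apply/derivedP => -[a aA [xa _]].
by move: xD; rewrite (subsetP (AD a aA)).
Qed.

Lemma SQS_derived_STS X A x : is_SQS X A -> x \in X -> is_STS (X :\ x) (derived A x).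
Proof.
move=> [Ablk Atri] xX; split.
  move=> b /derivedP[a aA [xa ->]]; have [aX ca] := Ablk a aA.
  by rewrite setSD //; move: ca; rewrite (cardsD1 x a) xa => -[].
move=> y z; rewrite !in_setD1 => /andP[yx yX] /andP[zx zX] yz.
set t := [set x; y; z].
have t3 : #|t| = 3 by rewrite /t -setUA cardsU1 cards2 yz !inE negb_or eq_sym yx eq_sym zx.
have tX : t \subset X by apply/subsetP => w; rewrite !inE -orbA => /or3P[] /eqP->.
have /eqP/cards1P[a0 Ea0] := Atri t tX t3.
have : a0 \in [set a in A | t \subset a] by rewrite Ea0 set11.
rewrite inE => /andP[a0A /subsetP ta0].
apply/eqP/cards1P; exists (a0 :\ x); apply/setP => b; rewrite !inE.
apply/andP/eqP => [[/derivedP[a aA [xa ->]]] | ->].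
  rewrite !inE => /andP[/andP[_ ya] /andP[_ za]].
  suff : a \in [set a in A | t \subset a] by rewrite Ea0 inE => /eqP->.
  by rewrite inE aA; apply/subsetP => w; rewrite !inE -orbA => /or3P[] /eqP->.
rewrite !inE yx zx !ta0 ?inE ?eqxx ?orbT //; split => //.
by apply/derivedP; exists a0 => //; split => //; apply: ta0; rewrite !inE eqxx.
Qed.

Lemma STS_block_uniq Y B x y b1 b2 : is_STS Y B -> x \in Y -> y \in Y -> x != y ->
  b1 \in B -> b2 \in B -> x \in b1 -> y \in b1 -> x \in b2 -> y \in b2 -> b1 = b2.
Proof.
move=> [_ Bpair] xY yY xy b1B b2B x1 y1 x2 y2.
by apply: (cards1_eq (Bpair x y xY yY xy)); rewrite inE ?b1B ?b2B ?x1 ?y1 ?x2 ?y2.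
Qed.

(* The blocks through p, minus p, partition the other points into pairs. *)
Lemma STS_card_point Y B p :
  is_STS Y B -> p \in Y -> #|Y| = (#|[set b in B | p \in b]| * 2).+1.
Proof.
move=> sts pY; have [Bblk Bpair] := sts.
set Bp := [set b in B | p \in b]; set P := [set b :\ p | b in Bp].
have injP : {in Bp &, injective (fun b => b :\ p)}.
  move=> b1 b2; rewrite !inE => /andP[_ p1] /andP[_ p2] e.
  by rewrite -(setD1K p1) -(setD1K p2) e.
have P2 : {in P, forall b : {set T}, #|b| = 2}.
  move=> _ /imsetP[b + ->]; rewrite inE => /andP[bB pb].
  by have [_] := Bblk b bB; rewrite (cardsD1 p) pb => -[].
suff /(card_uniform_partition P2) : partition P (Y :\ p).
  by rewrite card_in_imset // (cardsD1 p Y) pY => ->.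
apply/and3P; split.
- apply/eqP/setP => y; apply/bigcupP/idP => [[_ /imsetP[b + ->]] | ].
    rewrite inE => /andP[bB pb] /setD1P[yp yb].
    by rewrite !inE yp (subsetP (Bblk b bB).1).
  case/setD1P => yp yY; have py : p != y by rewrite eq_sym.
  have /eqP/cards1P[b Eb] := Bpair _ _ pY yY py.
  have : b \in [set b in B | (p \in b) && (y \in b)] by rewrite Eb set11.
  rewrite inE => /and3P[bB pb yb].
  by exists (b :\ p); [apply: imset_f; rewrite inE bB | rewrite !inE yp].
- apply/trivIsetP => _ _ /imsetP[b1 + ->] /imsetP[b2 + ->].
  rewrite !inE => /andP[b1B p1] /andP[b2B p2] ne.
  apply/disjointP => y /setD1P[yp y1] /setD1P[_ y2]; move/eqP: ne; apply.
  have yY := subsetP (Bblk b1 b1B).1 y y1.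
  by rewrite (STS_block_uniq sts pY yY _ b1B b2B p1 y1 p2 y2) // eq_sym.
- by apply/negP => /P2; rewrite cards0.
Qed.
End Designs.

Section Colourings.
Variable T : finType.
Implicit Types (Y : {set T}) (B : {set {set T}}).

Lemma proper_col_inj B (K : Type) (c : {set T} -> K) x :
  proper_col B c -> {in [set b in B | x \in b] &, injective c}.
Proof.
move=> pc b1 b2; rewrite !inE => /andP[b1B x1] /andP[b2B x2] e.
apply/eqP/negPn/negP => ne.
by move: (pc b1 b2 b1B b2B ne e) => /disjointP/(_ x x1 x2).
Qed.

(* With at most #|Y|/2 colours every point meets every colour, so each colour class
   is a parallel class and 3 divides #|Y|. *)
Lemma STS_colours_lb Y B k (c : {set T} -> 'I_k) :
  is_STS Y B -> proper_col B c -> ~~ (3 %| #|Y|) -> #|Y| < 2 * k.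
Proof.
move=> sts pc Y3; have [Bblk _] := sts.
have deg q : q \in Y -> #|Y| = (#|c @: [set b in B | q \in b]| * 2).+1.
  by move=> qY; rewrite card_in_imset ?(STS_card_point sts qY) //; apply: proper_col_inj pc.
have [p pY] : exists p, p \in Y.
  by apply/set0Pn; apply: contraNneq Y3 => ->; rewrite cards0.
rewrite ltnNge; apply/negP => Yk.
have full q : q \in Y -> c @: [set b in B | q \in b] = [set: 'I_k].
  move=> qY; apply/eqP; rewrite eqEcard subsetT cardsT card_ord.
  by have := deg q qY; have := deg p pY; lia.
set i := c set0; set Ci := [set b in B | c b == i].
have Ci3 : {in Ci, forall b : {set T}, #|b| = 3}.
  by move=> b; rewrite inE => /andP[/Bblk[]].
suff /(card_uniform_partition Ci3) CiY : partition Ci Y.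
  by move: Y3; rewrite CiY dvdn_mull.
apply/and3P; split.
- apply/eqP/setP => y; apply/bigcupP/idP => [[b] | yY].
    by rewrite inE => /andP[/Bblk[/subsetP bY _] _] /bY.
  have : i \in c @: [set b in B | y \in b] by rewrite (full y yY) inE.
  case/imsetP => b; rewrite inE => /andP[bB yb] ci; exists b => //.
  by rewrite /Ci inE bB ci eqxx.
- apply/trivIsetP => b1 b2; rewrite !inE => /andP[b1B /eqP c1] /andP[b2B /eqP c2] ne.
  by apply: pc; rewrite ?c1 ?c2.
- by apply/negP => /Ci3; rewrite cards0.
Qed.

Lemma resolvable_colourable Y B :
  is_STS Y B -> resolvable Y B -> Y != set0 -> colourable B (#|Y| %/ 2).
Proof.
move=> sts [m [c [pc cov]]] /set0Pn[p pY].
have m_le : m <= #|Y| %/ 2.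
  have Bp : m <= #|[set b in B | p \in b]|.
    apply: leq_trans (leq_imset_card c _).
    rewrite -[leqLHS]card_ord -cardsT subset_leq_card //; apply/subsetP => i _.
    move: pY; rewrite -(cov i) => /bigcupP[b /andP[bB /eqP ci] pb].
    by apply/imsetP; exists b; rewrite // inE bB pb.
  by move: Bp; rewrite (STS_card_point sts pY); lia.
exists (fun b => widen_ord m_le (c b)) => b1 b2 b1B b2B ne [/val_inj].
exact: pc.
Qed.

Lemma proper_colU (K : Type) B1 B2 (c1 c2 : {set T} -> K) :
  proper_col B1 c1 -> proper_col B2 c2 ->
  (forall b1 b2, b1 \in B1 -> b2 \in B2 -> c1 b1 = c2 b2 -> [disjoint b1 & b2]) ->
  proper_col (B1 :|: B2) (fun b => if b \in B1 then c1 b else c2 b).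
Proof.
move=> pc1 pc2 cross b1 b2; rewrite !inE.
case: ifP => b1B1; case: ifP => b2B1 /= b1B b2B ne e.
- exact: pc1.
- exact: cross.
- by rewrite disjoint_sym; apply: cross.
- exact: pc2.
Qed.

Lemma proper_col_bigcup (I : finType) (J : {set I}) (F : I -> {set {set T}})
    (K : Type) (c : I -> {set T} -> K) :
  (forall i, i \in J -> proper_col (F i) (c i)) ->
  proper_col (\bigcup_(i in J) F i)
    (fun b => omap (fun i => (i, c i b)) [pick i in J | b \in F i]).
Proof.
move=> pc b1 b2 /bigcupP[i1 i1J b1F] /bigcupP[i2 i2J b2F] ne.
case: pickP => [j1 /andP[j1J b1F'] | /(_ i1)]; last by rewrite i1J b1F.
case: pickP => [j2 /andP[j2J b2F'] | /(_ i2)]; last by rewrite i2J b2F.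
by move=> /= [ej]; subst j2 => e; exact: (pc j1 j1J b1 b2 b1F' b2F' ne e).
Qed.

Lemma colourable_card B (K : finType) (c : {set T} -> K) k :
  proper_col B c -> 0 < k -> #|c @: B| <= k -> colourable B k.
Proof.
case: k => // k pc _ ck; set s := enum (c @: B).
have mem_s b : b \in B -> c b \in s by move=> bB; rewrite mem_enum imset_f.
have idx_lt b : b \in B -> index (c b) s < k.+1.
  by move=> bB; apply: leq_trans ck; rewrite cardE index_mem mem_s.
exists (fun b => inord (index (c b) s)) => b1 b2 b1B b2B ne /(congr1 (@nat_of_ord _)).
rewrite !inordK ?idx_lt // => e; apply: pc => //.
by rewrite -(nth_index (c b1) (mem_s _ b1B)) e nth_index ?mem_s.
Qed.

Lemma colourable_in B (K : finType) (C : {set K}) m :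
  colourable B m -> m <= #|C| ->
  exists c : {set T} -> K, proper_col B c /\ forall b, c b \in C.
Proof.
move=> [c pc] mC; exists (fun b => enum_val (widen_ord mC (c b))).
split=> [b1 b2 b1B b2B ne /enum_val_inj [/val_inj] | b].
  exact: pc.
exact: enum_valP.
Qed.

Lemma colourable_bigcup (I : finType) (J : {set I}) (F : I -> {set {set T}}) m :
  (forall i, i \in J -> colourable (F i) m) ->
  exists c : {set T} -> option (I * 'I_m),
    proper_col (\bigcup_(i in J) F i) c /\
    forall b, b \in \bigcup_(i in J) F i ->
      exists i j, [/\ i \in J, b \in F i & c b = Some (i, j)].
Proof.
case: (posnP m) => [-> | m_gt0] colF.
  have noJ i : i \in J -> False by move/colF=> [c _]; case: (c set0).
  by exists (fun _ => None); split=> [b1 b2 | b] /bigcupP[j /noJ].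
have [cF cFP] : exists cF : I -> {set T} -> 'I_m,
    forall i, i \in J -> proper_col (F i) (cF i).
  apply: (functional_choice (fun i c => i \in J -> proper_col (F i) c)) => i.
  case iJ: (i \in J); last by exists (fun _ => Ordinal m_gt0).
  by have [c pc] := colF i iJ; exists c.
exists (fun b => omap (fun i => (i, cF i b)) [pick i in J | b \in F i]).
split=> [|b /bigcupP[i iJ bF]]; first exact: proper_col_bigcup.
case: pickP => [i' /andP[i'J bF'] | /(_ i)]; last by rewrite iJ bF.
by exists i', (cF i' b).
Qed.
End Colourings.

Lemma chi_is_lb v k : chi_is v k -> ~~ (3 %| v) -> v < 2 * k.
Proof.
move=> [[B [sts [c pc]]] _].
by have := STS_colours_lb sts pc; rewrite cardsT card_ord.
Qed.

Lemma chi_is1 : chi_is 1 1.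
Proof.
split=> [|B [|j] _ [c _] //]; last by case: (c set0).
exists set0; split; last by exists (fun _ => ord0) => b1 b2; rewrite inE.
by split=> [b | x y _ _]; rewrite ?inE // !ord1 eqxx.
Qed.

Section ImageDesign.
Variables (U T : finType) (f : U -> T).
Hypothesis f_inj : injective f.

Definition image_design (A : {set {set U}}) : {set {set T}} :=
  [set f @: (a : {set U}) | a in A].

Lemma preimset_imset (a : {set U}) : f @^-1: (f @: a) = a.
Proof. by apply/setP => u; rewrite inE mem_imset. Qed.

Lemma imset_preimset (b : {set T}) (X : {set U}) : b \subset f @: X -> f @: (f @^-1: b) = b.
Proof.
move=> /subsetP bX; apply/setP => y; apply/imsetP/idP => [[u] | yb].
  by rewrite inE => uy ->.
by have /imsetP[u _ yu] := bX y yb; exists u; rewrite // inE -yu.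
Qed.

Lemma imset_subset (a b : {set U}) : (f @: a \subset f @: b) = (a \subset b).
Proof.
apply/idP/idP => [/subsetP ab | /imsetS //].
by apply/subsetP => u ua; rewrite -(mem_imset _ _ f_inj) ab ?imset_f.
Qed.

Lemma imsetD1_inj (a : {set U}) x : f @: (a :\ x) = f @: a :\ f x.
Proof.
apply/setP => y; rewrite inE; apply/imsetP/andP => [[u /setD1P[ux ua] ->] | [yx]].
  by rewrite inE (inj_eq f_inj) ux imset_f.
by case/imsetP=> u ua yu; exists u; rewrite // !inE ua -(inj_eq f_inj) -yu -in_set1 yx.
Qed.

Lemma SQS_image X A : is_SQS X A -> is_SQS (f @: X) (image_design A).
Proof.
move=> [Ablk Atri]; split=> [_ /imsetP[a aA ->] | t tX t3].
  by have [aX a4] := Ablk a aA; rewrite imsetS // card_imset.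
set t' := f @^-1: t; have tt' : t = f @: t' by rewrite (imset_preimset tX).
have t'X : t' \subset X by rewrite -imset_subset -tt'.
have t'3 : #|t'| = 3 by rewrite -(card_imset _ f_inj) -tt'.
rewrite -(Atri t' t'X t'3) -(card_imset _ (imset_inj f_inj)).
suff -> : [set b in image_design A | t \subset b] =
          image_design [set a in A | t' \subset a] :> {set {set T}} by [].
apply/setP => b; rewrite inE; apply/andP/imsetP => [[/imsetP[a aA ->]] | [a]].
  by rewrite tt' imset_subset => ta; exists a; rewrite // inE aA.
by rewrite inE => /andP[aA ta] ->; rewrite imset_f // tt' imset_subset.
Qed.

Lemma derived_image A x : derived (image_design A) (f x) = image_design (derived A x).
Proof.
apply/setP => b.
apply/derivedP/imsetP => [[_ /imsetP[a aA ->]] | [_ /derivedP[a aA [xa ->]] ->]].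
  rewrite mem_imset // => -[xa ->]; exists (a :\ x); last by rewrite imsetD1_inj.
  by apply/derivedP; exists a.
by exists (f @: a); rewrite ?imset_f ?imsetD1_inj.
Qed.

Lemma resolvable_image Y B : resolvable Y B -> resolvable (f @: Y) (image_design B).
Proof.
move=> [m [c [pc cov]]]; exists m, (fun b : {set T} => c (f @^-1: b)); split.
  move=> _ _ /imsetP[a1 a1B ->] /imsetP[a2 a2B ->].
  rewrite !preimset_imset imset_disjoint // => ne; apply: pc => //.
  by apply: contra_neq ne => ->.
move=> i; apply/setP => y; rewrite -(cov i).
apply/bigcupP/imsetP => [[_ /andP[/imsetP[a aB ->]]] | [u /bigcupP[a /andP[aB ci] ua] ->]].
  rewrite preimset_imset => ci /imsetP[u ua ->].
  by exists u => //; apply/bigcupP; exists a; rewrite ?aB.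
by exists (f @: a); rewrite ?imset_f ?preimset_imset ?aB.
Qed.

Lemma RDSQS_image X A : RDSQS X A -> RDSQS (f @: X) (image_design A).
Proof.
move=> [sqs res]; split=> [|_ /imsetP[x xX ->]]; first exact: SQS_image.
by rewrite derived_image -imsetD1_inj; apply/resolvable_image/res.
Qed.
End ImageDesign.

Lemma exists_embedding (T : finType) (D : {set T}) m :
  #|D| = m -> exists f : 'I_m -> T, injective f /\ f @: [set: 'I_m] = D.
Proof.
move=> Dm; exists (fun i => enum_val (cast_ord (esym Dm) i)); split.
  by move=> i j /enum_val_inj /cast_ord_inj.
apply/setP => y; apply/imsetP/idP => [[i _ ->] | yD]; first exact: enum_valP.
exists (cast_ord Dm (enum_rank_in yD y)) => //.
by rewrite cast_ordK enum_rankK_in.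
Qed.

Section Filling.
Variables (T : finType) (g n : nat) (S H : {set T}) (G : {set {set T}}).
Variables (A : {set {set T}}) (F : {set T} -> {set {set T}}).
Hypothesis card_T : #|T| = g * n + 2.
Hypothesis n_mod3 : n %% 3 = 0.
Hypothesis card_S : #|S| = 2.
Hypothesis G_partition : partition G ([set: T] :\: S).
Hypothesis card_G : #|G| = n.
Hypothesis card_group : forall G0, G0 \in G -> #|G0| = g.
Hypothesis A_block : forall a, a \in A -> a \subset [set: T] /\ #|a| = 4.
Hypothesis A_triple1 : forall t : {set T}, t \subset [set: T] -> #|t| = 3 ->
  (forall G0, G0 \in G -> ~~ (t \subset S :|: G0)) -> #|[set a in A | t \subset a]| = 1.
Hypothesis A_triple0 : forall t : {set T}, t \subset [set: T] -> #|t| = 3 ->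
  (exists G0, G0 \in G /\ t \subset S :|: G0) -> #|[set a in A | t \subset a]| = 0.
Hypothesis A_gcSTS : forall G0 x, G0 \in G -> x \in G0 ->
  gcSTS ([set: T] :\ x) ((G0 :|: S) :\ x) (derived A x).
Hypothesis A_gcGDD : forall x, x \in S -> gcGDD ([set: T] :\: S) G g n (derived A x) H.
Hypothesis F_RDSQS : forall G0, G0 \in G -> RDSQS (S :|: G0) (F G0).

Definition filled := A :|: \bigcup_(G0 in G) F G0.

Lemma filledP a : reflect (a \in A \/ exists2 G0, G0 \in G & a \in F G0) (a \in filled).
Proof. by apply: (iffP setUP) => -[|/bigcupP]; auto. Qed.

Lemma group_disjoint_S G0 : G0 \in G -> [disjoint S & G0].
Proof.
move=> /(partitionS G_partition) /subsetP GS; apply/disjointP => y yS /GS.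
by rewrite inE yS.
Qed.

Lemma group_uniq G1 G2 y : G1 \in G -> G2 \in G -> y \in G1 -> y \in G2 -> G1 = G2.
Proof.
have /and3P[_ triv _] := G_partition.
by move=> G1G G2G y1 y2; rewrite -(def_pblock triv G1G y1) (def_pblock triv G2G y2).
Qed.

Lemma card_S_group G0 : G0 \in G -> #|S :|: G0| = g + 2.
Proof.
move=> G0G; have := cardsUI S G0.
by rewrite (disjoint_setI0 (group_disjoint_S G0G)) cards0 addn0 card_S (card_group G0G) addnC.
Qed.

Lemma card_setT_D1 x : #|[set: T] :\ x| = g * n + 1.
Proof. by have := cardsD1 x [set: T]; rewrite in_setT cardsT card_T; lia. Qed.

Lemma fill_block_sub G0 : G0 \in G -> forall a, a \in F G0 -> a \subset S :|: G0.
Proof. by move=> /F_RDSQS[[Fblk _] _] a /Fblk[]. Qed.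

Lemma fill_triple_group (t : {set T}) G0 G1 a : #|t| = 3 -> G0 \in G -> G1 \in G ->
  t \subset S :|: G0 -> a \in F G1 -> t \subset a -> G1 = G0.
Proof.
move=> t3 G0G G1G /subsetP tG0 aF /subsetP ta.
have [y yt yS] : exists2 y, y \in t & y \notin S.
  by apply/subsetPn/negP => /subset_leq_card; rewrite t3 card_S.
have := subsetP (fill_block_sub G1G aF) y (ta y yt); have := tG0 y yt.
rewrite !inE (negbTE yS) /= => y0 y1; exact: group_uniq y1 y0.
Qed.

Lemma filled_SQS : is_SQS [set: T] filled.
Proof.
split=> [a /filledP[/A_block // | [G0 G0G /(F_RDSQS G0G).1.1[_ a4]]] | t _ t3].
  by rewrite subsetT.
case: (boolP [exists G0 in G, t \subset S :|: G0]) => [/exists_inP[G0 G0G tG0] | none].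
  have noA a : a \in A -> ~~ (t \subset a).
    move=> aA; apply/negP => ta.
    have /cards0_eq/setP/(_ a) := A_triple0 (subsetT t) t3 (ex_intro _ G0 (conj G0G tG0)).
    by rewrite !inE aA ta.
  rewrite -((F_RDSQS G0G).1.2 t tG0 t3); apply: eq_card => a; rewrite [LHS]inE [RHS]inE.
  apply/andP/andP => [[/filledP[/noA/negP // | [G1 G1G aF]] ta] | [aF ta]].
    by rewrite -(fill_triple_group t3 G0G G1G tG0 aF ta).
  by split=> //; apply/filledP; right; exists G0.
rewrite -(A_triple1 (subsetT t) t3); last first.
  by move=> G0 G0G; apply: contra none => tG; apply/exists_inP; exists G0.
apply: eq_card => a; rewrite [LHS]inE [RHS]inE.
apply/andP/andP => [[/filledP[// | [G1 G1G aF]] ta] | [aA ta]]; last first.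
  by split=> //; apply/filledP; left.
case/negP: none; apply/exists_inP; exists G1 => //.
exact: subset_trans ta (fill_block_sub G1G aF).
Qed.

Lemma derived_filled_group G0 x : G0 \in G -> x \in G0 ->
  derived filled x = derived A x :|: derived (F G0) x.
Proof.
move=> G0G xG0; rewrite derivedU derived_bigcup (bigD1 G0) //= big1 ?setU0 //.
move=> G1 /andP[G1G G10]; apply: derived_eq0 (fill_block_sub G1G) _.
rewrite inE negb_or (disjointFl (group_disjoint_S G0G) xG0) /=.
by apply: contra G10 => xG1; rewrite (group_uniq G1G G0G xG1 xG0).
Qed.

Lemma g_even : 2 %| g.
Proof.
have [x xS] : exists x, x \in S by apply/card_gt0P; rewrite card_S.
by have [] := A_gcGDD xS; rewrite dvdn2.
Qed.

Lemma card_S_group_D1 G0 x : G0 \in G -> x \in S :|: G0 -> #|(S :|: G0) :\ x| = g.+1.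
Proof. by move=> G0G xSG; have := cardsD1 x (S :|: G0); rewrite xSG card_S_group //; lia. Qed.

Lemma colourable_derived_fill G0 x : G0 \in G -> x \in S :|: G0 ->
  colourable (derived (F G0) x) (g %/ 2).
Proof.
move=> G0G xSG; have [sqs res] := F_RDSQS G0G.
have /dvdnP[h g2h] := g_even.
have := resolvable_colourable (SQS_derived_STS sqs xSG) (res x xSG).
by rewrite -card_gt0 card_S_group_D1 // g2h => /(_ isT); congr colourable; lia.
Qed.

Lemma chi_bound k : chi_is (g * n + 1) k -> g * n + 2 <= 2 * k.
Proof.
have n3 : 3 %| n by apply/eqP.
by move=> /chi_is_lb; rewrite dvdn_addr ?dvdn_mull // => /(_ isT); lia.
Qed.

Lemma chi_exists : exists k, chi_is (g * n + 1) k.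
Proof.
case: (posnP n) => [-> | n_gt0]; first by exists 1; rewrite muln0; apply: chi_is1.
have [G0 G0G] : exists G0, G0 \in G by apply/card_gt0P; rewrite card_G.
have /set0Pn[x xG0] : G0 != set0.
  by have /and3P[_ _ G0_nonempty] := G_partition; apply: contraNneq G0_nonempty => <-.
have [_ [k [chik _]]] := A_gcSTS G0G xG0.
by exists k; rewrite -(card_setT_D1 x).
Qed.

Lemma mcSTS_derived_group G0 x : G0 \in G -> x \in G0 ->
  mcSTS ([set: T] :\ x) (derived filled x).
Proof.
move=> G0G xG0; have [_ [k [chik [c [pc [C [card_C C_disj]]]]]]] := A_gcSTS G0G xG0.
split; first exact: SQS_derived_STS filled_SQS (in_setT x).
exists k; split=> //; rewrite card_setT_D1 in chik card_C.
have xSG : x \in S :|: G0 by rewrite inE xG0 orbT.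
have C_big : g %/ 2 <= #|C|.
  rewrite card_C setUC card_S_group_D1 //; have := chi_bound chik.
  have n_gt0 : 0 < n by rewrite -card_G; apply/card_gt0P; exists G0.
  by have /dvdnP[h ->] := g_even; rewrite mulnAC; nia.
have [c2 [pc2 c2C]] := colourable_in (colourable_derived_fill G0G xSG) C_big.
rewrite (derived_filled_group G0G xG0).
exists (fun b => if b \in derived A x then c b else c2 b).
apply: proper_colU => // b1 b2 b1A b2F e.
apply: disjointWr (derived_sub (fill_block_sub G0G) b2F) _.
by rewrite setUC; apply: C_disj; rewrite // e.
Qed.

Lemma mcSTS_derived_S x : x \in S -> mcSTS ([set: T] :\ x) (derived filled x).
Proof.
move=> xS; have [k chik] := chi_exists.
split; first exact: SQS_derived_STS filled_SQS (in_setT x).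
exists k; split; first by rewrite card_setT_D1.
have [_ [[_ [_ [_ [A_blk _]]]] [_ [c [pc c_group]]]]] := A_gcGDD xS.
have xSG G1 : x \in S :|: G1 by rewrite inE xS.
have [c2 [pc2 c2_group]] :=
  colourable_bigcup (fun G1 G1G => colourable_derived_fill G1G (xSG G1)).
set palette := None |: [set Some p | p in setX G [set: 'I_(g %/ 2)]].
have Some_palette G1 j : G1 \in G -> Some (G1, j) \in palette.
  by move=> G1G; apply/setU1P; right; apply: imset_f; rewrite in_setX G1G in_setT.
rewrite derivedU derived_bigcup; apply: (colourable_card (proper_colU pc pc2 _)).
- move=> b1 b2 b1A /c2_group[G1 [j [G1G b2F ->]]] cb1.
  have := c_group b1 b1A; rewrite cb1 => -[_ b1G1].
  apply/disjointP => y yb1 /(subsetP (derived_sub (fill_block_sub G1G) b2F)).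
  rewrite !inE => /andP[_ /orP[yS | yG1]].
    by have /subsetP/(_ y yb1) := (A_blk b1 b1A).1; rewrite !inE yS.
  by rewrite (disjointFr b1G1 yb1) in yG1.
- by have := chi_bound chik; lia.
apply: (@leq_trans #|palette|).
  apply/subset_leq_card/subsetP => _ /imsetP[b bB ->].
  case: ifP => [bA | bA].
    by have := c_group b bA; case: (c b) => [[G1 j] [G1G _] | _]; rewrite ?Some_palette // !inE.
  by move: bB; rewrite inE bA => /c2_group[G1 [j [G1G _ ->]]]; apply: Some_palette.
rewrite cardsU1 card_imset; last by move=> p1 p2 [].
rewrite cardsX cardsT card_ord card_G; have := chi_bound chik.
by have /dvdnP[h ->] := g_even; case: (_ \notin _); nia.
Qed.

Lemma filled_mcDSQS : mcDSQS [set: T] filled.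
Proof.
split=> [|x _]; first exact: filled_SQS.
case xS: (x \in S); first exact: mcSTS_derived_S.
have /and3P[/eqP coverG _ _] := G_partition.
have : x \in cover G by rewrite coverG !inE xS.
by case/bigcupP=> G0 G0G xG0; apply: mcSTS_derived_group G0G xG0.
Qed.
End Filling.

Theorem mainTheorem15 (g n : nat) :
  n %% 3 = 0 -> exists_cDCQS1 g n -> exists_RDSQS (g + 2) ->
  exists_mcDSQS (g * n + 2).
Proof.
move=> n_mod3 [S [G [A [[_ [G_part [card_G [card_group [A_block [A_triple1 A_triple0]]]]]]
  [card_S [A_gcSTS [H A_gcGDD]]]]]]] [A' A'_RDSQS].
have [F F_RDSQS] : exists F : {set 'I_(g * n + 2)} -> {set {set 'I_(g * n + 2)}},
    forall G0, G0 \in G -> RDSQS (S :|: G0) (F G0).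
  apply: (functional_choice (fun G0 F0 => G0 \in G -> RDSQS (S :|: G0) F0)) => G0.
  case G0G: (G0 \in G); last by exists set0.
  have [f [f_inj <-]] := exists_embedding (card_S_group card_S G_part card_group G0G).
  by exists (image_design f A') => _; exact: (RDSQS_image f_inj A'_RDSQS).
exists (filled G A F).
exact: (filled_mcDSQS (card_ord _) n_mod3 card_S G_part card_G card_group A_block
  A_triple1 A_triple0 A_gcSTS A_gcGDD F_RDSQS).
Qed.
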